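(* For all integers $n\geq 8$ and $0\leq k\leq n/4$ there is a function $F_{n,k}$, defined on multisets of $n-k$ isomorphism classes of $(n-1)$-vertex graphs and taking real values, such that the following holds. For every graph $G$ on $n$ vertices with average degree $d^*$ and every choice of distinct vertices $v_1,\dots,v_{n-k}$ of $G$, the quantity $\widetilde d=F_{n,k}(\{G-v_1,\dots,G-v_{n-k}\})$ satisfies $0\leq \widetilde d-d^*<1$. (That is, from any deck of $G$ missing $k\le n/4$ cards one can reconstruct a quantity $\widetilde d$ with $0\le\widetilde d-d^*<1$.)
   Context: All graphs are finite, simple and undirected. For a graph $G$ and $v\in V(G)$, the card $G-v$ is the graph obtained by deleting $v$ and all edges incident to it. The average degree of an $n$-vertex graph with $m$ edges is $2m/n$. The multiset of cards is unlabelled, i.e. only the isomorphism classes of the cards are given. *)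

From HB Require Import structures.
From mathcomp Require Import all_boot all_order all_algebra fingroup perm.
From mathcomp Require Import reals.
Set Implicit Arguments. Unset Strict Implicit. Unset Printing Implicit Defensive.
Import Order.TTheory GRing.Theory Num.Theory.

Definition simple_graph (n : nat) (g : rel 'I_n) : Prop :=
  symmetric g /\ irreflexive g.

Definition nedges (n : nat) (g : rel 'I_n) : nat :=
  #|[set e : 'I_n * 'I_n | (e.1 < e.2)%N && g e.1 e.2]|.

Definition avg_degree (R : realType) (n : nat) (g : rel 'I_n) : R :=
  ((2 * nedges g)%:R / n%:R)%R.

(* The card G - v, with the remaining vertices relabelled by 'I_n.-1
   in increasing order (via lift v). *)
Definition deleted_card (n : nat) (g : rel 'I_n) (v : 'I_n) : rel 'I_n.-1 :=
  fun i j => g (lift v i) (lift v j).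

Definition graph_iso (m : nat) (g h : rel 'I_m) : Prop :=
  exists s : {perm 'I_m}, forall x y, g x y = h (s x) (s y).

(* A function on indexed families of N graphs that only depends on the
   multiset of isomorphism classes, i.e. is a function on multisets of
   N isomorphism classes of m-vertex graphs. *)
Definition deck_invariant (R : Type) (N m : nat)
    (F : ('I_N -> rel 'I_m) -> R) : Prop :=
  forall (D1 D2 : 'I_N -> rel 'I_m) (s : {perm 'I_N}),
    (forall i, graph_iso (D1 i) (D2 (s i))) -> F D1 = F D2.

From HB Require Import structures.
From mathcomp Require Import all_boot all_order all_algebra fingroup perm.
From mathcomp Require Import reals.
From mathcomp Require Import zify ring.
Import Order.TTheory GRing.Theory Num.Theory.
Set Implicit Arguments. Unset Strict Implicit.

(* Write deg v for the degree of v and D(G) = sum_v deg v = 2e(G) for the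
   degree sum; D is an isomorphism invariant.  Deleting a vertex v removes
   exactly the deg v edges at v, so D(G - v) = D(G) - 2 deg v.  Summing over
   the N = n - k available cards, with S = {v_1, ..., v_N},
       T := sum_i D(G - v_i) = N D(G) - 2 sum_(v in S) deg v.
   Since 0 <= D(G) - sum_(v in S) deg v <= k (n - 1) (the k missing vertices
   have degree at most n - 1), we get
       0 <= T - (N - 2) D(G) <= 2k (n - 1) < n (N - 2)     (n >= 8, 4k <= n).
   Hence the deck function  T / (n (N - 2))  differs from d* = D(G) / n by a
   quantity in [0, 1).  The file first develops degrees and degree sums, then
   the counting bounds over the image S, an elementary real estimate, and
   finally the theorem. *)

Section Degrees.
Variable m : nat.
Implicit Types (h : rel 'I_m) (a : 'I_m).

Definition deg h a : nat := (\sum_b (h a b : nat))%N.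
Definition degree_sum h : nat := (\sum_a deg h a)%N.

Lemma degree_sum_iso h h' : graph_iso h h' -> degree_sum h = degree_sum h'.
Proof.
case=> s hs; rewrite /degree_sum [in RHS](reindex_inj (@perm_inj _ s)) /=.
apply: eq_bigr => a _; rewrite /deg [in RHS](reindex_inj (@perm_inj _ s)) /=.
by apply: eq_bigr => b _; rewrite hs.
Qed.

Lemma degree_sum_nedges h : simple_graph h -> degree_sum h = (2 * nedges h)%N.
Proof.
case=> sym irr.
have nedgesE : nedges h = (\sum_(a : 'I_m) \sum_(b : 'I_m) ((a < b)%N && h a b : nat))%N.
  rewrite /nedges -sum1_card (pair_big predT predT) big_mkcond /=.
  by apply: eq_bigr => e _; rewrite inE; case: (_ && _).
have splitE : degree_sum h =
      (\sum_(a : 'I_m) \sum_(b : 'I_m) ((a < b)%N && h a b : nat)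
       + \sum_(a : 'I_m) \sum_(b : 'I_m) ((b < a)%N && h a b : nat))%N.
  rewrite -big_split; apply: eq_bigr => a _; rewrite -big_split.
  apply: eq_bigr => b _ /=.
  by case: (ltngtP a b) => [|| /val_inj ->]; rewrite ?irr ?addn0.
rewrite splitE nedgesE mul2n -addnn; congr (_ + _).
by rewrite exchange_big; apply: eq_bigr => a _; apply: eq_bigr => b _; rewrite sym.
Qed.

Lemma deg_le h a : irreflexive h -> (deg h a <= m.-1)%N.
Proof.
move=> irr; rewrite /deg (bigD1 a) //= irr add0n.
apply: (@leq_trans (\sum_(b | b != a) 1)%N).
  by apply: leq_sum => b _; case: (h a b).
by rewrite sum1_card cardC1 card_ord.
Qed.

End Degrees.

Lemma sum_lift n (j : 'I_n) (F : 'I_n -> nat) :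
  (\sum_(a | a != j) F a = \sum_(i < n.-1) F (lift j i))%N.
Proof.
by have := @bigD1_ord nat addn 0%N n j predT F erefl; rewrite (bigD1 j) //= => /addnI.
Qed.

(* Deleting v removes exactly the deg v edges at v: D(G - v) + 2 deg v = D(G). *)
Lemma degree_sum_card n (g : rel 'I_n) (v : 'I_n) :
  symmetric g -> irreflexive g ->
  (degree_sum (deleted_card g v) + 2 * deg g v)%N = degree_sum g.
Proof.
move=> sym irr.
have cardE : degree_sum (deleted_card g v)
           = (\sum_(a | a != v) \sum_(b | b != v) (g a b : nat))%N.
  by rewrite /degree_sum sum_lift; apply: eq_bigr => a _; rewrite /deg sum_lift.
have columnE : (\sum_(a | a != v) (g a v : nat))%N = deg g v.
  rewrite /deg [in RHS](bigD1 v) //= irr add0n.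
  by apply: eq_bigr => a _; rewrite sym.
have rowE a : deg g a = (g a v + \sum_(b | b != v) (g a b : nat))%N.
  by rewrite /deg (bigD1 v).
rewrite [in RHS]/degree_sum (bigD1 v) //= (eq_bigr _ (fun a _ => rowE a)).
by rewrite big_split /= columnE cardE addnC mul2n -addnn -addnA.
Qed.

Lemma sum_split_bounded (T : finType) (S : {set T}) (F : T -> nat) (c : nat) :
  (forall a, F a <= c)%N ->
  (\sum_(a in S) F a <= \sum_a F a <= \sum_(a in S) F a + #|~: S| * c)%N.
Proof.
move=> Fc; rewrite [X in (_ <= X <= _)%N](bigID (mem S)) /= leq_addr leq_add2l.
rewrite -sum_nat_const; apply: (@leq_trans (\sum_(a | a \notin S) c)%N).
  exact: leq_sum.
by apply: eq_leq; apply: eq_bigl => a; rewrite inE.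
Qed.

Section Deck.
Variables (n N : nat) (g : rel 'I_n) (v : 'I_N -> 'I_n).
Hypotheses (sym : symmetric g) (irr : irreflexive g) (inj_v : injective v).

Definition deck_sum : nat := (\sum_i degree_sum (deleted_card g (v i)))%N.
Definition chosen_deg_sum : nat := (\sum_i deg g (v i))%N.

Lemma deck_sumE : (deck_sum + 2 * chosen_deg_sum)%N = (N * degree_sum g)%N.
Proof.
rewrite /deck_sum /chosen_deg_sum big_distrr -big_split /=.
rewrite (eq_bigr (fun _ => degree_sum g)) ?sum_nat_const ?card_ord //.
by move=> i _; apply: degree_sum_card.
Qed.

Lemma chosen_deg_sum_bounds :
  (chosen_deg_sum <= degree_sum g <= chosen_deg_sum + (n - N) * n.-1)%N.
Proof.
set S := [set v i | i in 'I_N].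
have sumS : (\sum_(a in S) deg g a)%N = chosen_deg_sum.
  by rewrite big_imset //; move=> i j _ _ /inj_v.
have cardCS : #|~: S| = (n - N)%N.
  by rewrite cardsCs setCK card_imset // !card_ord; have := cardsC S; lia.
rewrite -sumS -cardCS; apply: sum_split_bounded => a; exact: deg_le.
Qed.

End Deck.

Unset Implicit Arguments.
Local Open Scope ring_scope.

Lemma ratio_estimate (R : realFieldType) (T D n p : nat) :
  (0 < n)%N -> (0 < p)%N -> (p * D <= T)%N -> (T - p * D < n * p)%N ->
  0 <= T%:R / (n * p)%:R - D%:R / n%:R :> R /\
  T%:R / (n * p)%:R - D%:R / n%:R < 1 :> R.
Proof.
move=> n0 p0 lo hi.
have n0R : (n%:R : R) != 0 by rewrite pnatr_eq0 -lt0n.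
have p0R : (p%:R : R) != 0 by rewrite pnatr_eq0 -lt0n.
have -> : T%:R / (n * p)%:R - D%:R / n%:R = (T - p * D)%N%:R / (n * p)%:R :> R.
  by rewrite natrB // !natrM; field; rewrite n0R p0R.
split; first exact: divr_ge0.
by rewrite ltr_pdivrMr ?mul1r ?ltr_nat // ltr0n muln_gt0 n0 p0.
Qed.

Definition deck_estimate (R : realType) (n k : nat)
    (D : 'I_(n - k) -> rel 'I_n.-1) : R :=
  (\sum_i degree_sum (D i))%N%:R / (n * (n - k - 2))%N%:R.

Lemma deck_estimate_invariant (R : realType) (n k : nat) :
  deck_invariant (deck_estimate R n k).
Proof.
move=> D1 D2 s iso; congr (_%:R / _).
rewrite [in RHS](reindex_inj (@perm_inj _ s)).
by apply: eq_bigr => i _; apply: degree_sum_iso.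
Qed.

Theorem lemma2p2 (R : realType) (n k : nat) :
  (8 <= n)%N -> (4 * k <= n)%N ->
  exists F : ('I_(n - k) -> rel 'I_n.-1) -> R,
    deck_invariant F /\
    forall (g : rel 'I_n) (v : 'I_(n - k) -> 'I_n),
      simple_graph g -> injective v ->
      let dt := F (fun i => deleted_card g (v i)) in
      0 <= dt - avg_degree R g /\ dt - avg_degree R g < 1.
Proof.
move=> n8 kn; exists (deck_estimate R n k); split.
  exact: deck_estimate_invariant.
move=> g v [sym irr] inj_v /=; rewrite /avg_degree -degree_sum_nedges //.
have total := deck_sumE v sym irr.
have /andP[chosen_le chosen_ge] := chosen_deg_sum_bounds irr inj_v.
rewrite subKn in chosen_ge; last by lia.
(* The k missing vertices lose less than the normalisation n (N - 2);
   this is where n >= 8 and 4k <= n are needed. *)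
have margin : (2 * (k * (n - 1)) < n * (n - k - 2))%N by nia.
apply: ratio_estimate; rewrite -/(deck_sum g v); try rewrite mulnBl; lia.
Qed.
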